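(* Assume a single budget constraint with costs $c_I>0$ for all $I\in\mathcal I$, $\Sigma$ symmetric positive definite, $a\neq0$ with $\operatorname{supp}(a)\subseteq\bigcup\mathcal I$. Let $\underline\nu^*\in\mathbb{R}^{\mathcal I}_{\ge0}$ minimize $V_1$ over real allocations with budget $1$, and for $B>0$ let $\underline n_{\mathrm{round}}=\lfloor B\underline\nu^*\rfloor$ (componentwise floor), let $\underline n^*_{\mathrm{frac}}$ minimize $V_B$ over real feasible allocations and $\underline n^*_{\mathrm{int}}$ minimize $V_B$ over integer feasible allocations. Then $\lim_{B\to\infty}B\,V_B(\underline n_{\mathrm{round}})=V_1(\underline\nu^* )=B\,V_B(\underline n^*_{\mathrm{frac}})$, and consequently \[ \lim_{B\to\infty}\frac{V_B(\underline n^*_{\mathrm{frac}})}{V_B(\underline n^*_{\mathrm{int}})}=1 . \]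
   Context: $\mathcal I$ is a collection of nonempty subsets of $\{1,\dots,k\}$; $P_I:\mathbb{R}^k\to\mathbb{R}^{|I|}$ the coordinate projection onto $I$; $\Sigma_I=P_I\Sigma P_I^\top$. For $\underline n\in\mathbb{R}^{\mathcal I}_{\ge0}$, $V_B(\underline n)=a^\top\big(\sum_In_IP_I^\top\Sigma_I^{-1}P_I\big)^\dagger a$ ($\dagger$ = Moore–Penrose pseudo-inverse); $\underline n$ is feasible for budget $B$ if $n_I\ge0$, $\sum_Ic_In_I\le B$, and $\operatorname{supp}(a)\subseteq\bigcup\{I:n_I>0\}$. *)

From HB Require Import structures.
From mathcomp Require Import all_boot all_order all_algebra.
From mathcomp Require Import all_classical all_reals all_analysis.
Set Implicit Arguments. Unset Strict Implicit. Unset Printing Implicit Defensive.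
Import Order.TTheory GRing.Theory Num.Theory.
Local Open Scope ring_scope.

Section Defs.
Variable R : realType.
Variable k : nat.

Definition is_MP_pinv (M X : 'M[R]_k) : Prop :=
  [/\ M *m X *m M = M, X *m M *m X = X, (M *m X)^T = M *m X & (X *m M)^T = X *m M].

Definition MP_pinv (M : 'M[R]_k) : 'M[R]_k := xget 0 [set X | is_MP_pinv M X].

(* coordinate projection P_I : R^k -> R^{|I|}, rows indexed by the elements of I
   in increasing order *)
Definition proj_mx (I : {set 'I_k}) : 'M[R]_(#|I|, k) :=
  \matrix_(i < #|I|, j < k) (enum_val i == j)%:R.

Definition Sigma_sub (Sigma : 'M[R]_k) (I : {set 'I_k}) : 'M[R]_#|I| :=
  proj_mx I *m Sigma *m (proj_mx I)^T.

Definition info_mx (calI : {set {set 'I_k}}) (Sigma : 'M[R]_k)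
  (n : {set 'I_k} -> R) : 'M[R]_k :=
  \sum_(I in calI) n I *: ((proj_mx I)^T *m invmx (Sigma_sub Sigma I) *m proj_mx I).

(* V(n) = a^T (info matrix)^dagger a   (V_B does not depend on B itself) *)
Definition Vvar (calI : {set {set 'I_k}}) (Sigma : 'M[R]_k) (a : 'cV[R]_k)
  (n : {set 'I_k} -> R) : R :=
  (a^T *m MP_pinv (info_mx calI Sigma n) *m a) 0 0.

Definition feasible (calI : {set {set 'I_k}}) (c : {set 'I_k} -> R) (a : 'cV[R]_k)
  (B : R) (n : {set 'I_k} -> R) : Prop :=
  [/\ forall I, I \in calI -> 0 <= n I,
      \sum_(I in calI) c I * n I <= B &
      forall j : 'I_k, a j 0 != 0 -> exists2 I, I \in calI & (j \in I) && (0 < n I)].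

Definition integral_alloc (calI : {set {set 'I_k}}) (n : {set 'I_k} -> R) : Prop :=
  forall I, I \in calI -> exists m : nat, n I = m%:R.

End Defs.

From Pilot Require Import Defs.
From HB Require Import structures.
From mathcomp Require Import all_boot all_order all_algebra.
From mathcomp Require Import all_classical all_reals all_analysis.
From mathcomp Require Import ring lra.
Set Implicit Arguments.
Unset Strict Implicit.
Unset Printing Implicit Defensive.
Import Order.TTheory GRing.Theory Num.Theory.
Import numFieldNormedType.Exports.
Local Open Scope classical_set_scope.
Local Open Scope ring_scope.

(* Write M(n) = sum_I n_I P_I^T Sigma_I^-1 P_I.  Whenever n covers the support
   of a, the equation M(n) w = a is solvable (a is orthogonal to ker M(n)) and
   V(n) = w^T M(n) w for every solution w.  This makes V homogeneous of degree -1
   and antitone in n.  Homogeneity turns a budget-B optimum into B^-1 times the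
   budget-1 optimum.  With S = sum_I 1/nu_I, floor(B nu_I) lies between
   (B - S) nu_I and B nu_I, hence V(nu) <= B V(floor(B nu)) <= V(nu) / (1 - S/B);
   the integer optimum is squeezed between the fractional optimum and the rounded
   allocation, which gives the ratio. *)

Section QuadraticForm.
Variable R : realFieldType.

Definition qform n (M : 'M[R]_n) (x : 'cV[R]_n) : R := (x^T *m M *m x) 0 0.

Lemma trmx_mul_self_eq0 n (v : 'cV[R]_n) : (v^T *m v) 0 0 = 0 -> v = 0.
Proof.
rewrite mxE => vv0; apply/matrixP => i j; rewrite (ord1 j) mxE.
have sq_ge0 l : 0 <= v^T 0 l * v l 0 by rewrite mxE -expr2 sqr_ge0.
have /eqP := psumr_eq0P (P := predT) (fun l _ => sq_ge0 l) vv0 (i := i) isT.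
by rewrite mxE -expr2 sqrf_eq0 => /eqP.
Qed.

Lemma mul_trmx_self_eq0 n (v : 'rV[R]_n) : (v *m v^T) 0 0 = 0 -> v = 0.
Proof.
by move=> vv0; apply: trmx_inj; rewrite trmx0; apply: trmx_mul_self_eq0; rewrite trmxK.
Qed.

Lemma bilinear_sym n (M : 'M[R]_n) (x y : 'cV[R]_n) : M^T = M ->
  (x^T *m M *m y) 0 0 = (y^T *m M *m x) 0 0.
Proof.
move=> MT; have tr00 (A : 'M[R]_1) : A 0 0 = A^T 0 0 by rewrite mxE.
by rewrite tr00 !trmx_mul trmxK MT mulmxA.
Qed.

Lemma qformZl n (M : 'M[R]_n) t x : qform (t *: M) x = t * qform M x.
Proof. by rewrite /qform -scalemxAr -scalemxAl mxE. Qed.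

Lemma qformZr n (M : 'M[R]_n) s x : qform M (s *: x) = s ^+ 2 * qform M x.
Proof.
rewrite /qform linearZ /= linearZ /= -!scalemxAl !mxE.
by rewrite mulrA -expr2.
Qed.

Lemma qformB n (M : 'M[R]_n) x y : M^T = M ->
  qform M (x - y) = qform M x - 2 * (y^T *m M *m x) 0 0 + qform M y.
Proof.
move=> MT; have sub00 (A B : 'M[R]_1) : (A - B) 0 0 = A 0 0 - B 0 0 by rewrite !mxE.
rewrite /qform linearB /= linearB /= mulmxBl !mulmxBl !sub00.
rewrite (bilinear_sym x y MT); lra.
Qed.

End QuadraticForm.

Section PseudoInverse.
Variables (R : realType) (k : nat).
Implicit Types M : 'M[R]_k.

(* With K the orthogonal projector onto ker M, the matrix M + K is invertible
   and (M + K)^-1 - K satisfies the four Penrose conditions. *)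
Lemma sym_MP_pinv_exists M : M^T = M -> exists X, is_MP_pinv M X.
Proof.
move=> MT; set Bk := row_base (kermx M).
have BkM : Bk *m M = 0 by apply/eqP; rewrite -sub_kermx eq_row_base.
have ker_sub v : v *m M = 0 -> (v <= Bk)%MS.
  by move=> vM; rewrite eq_row_base sub_kermx vM.
have Bk_free : row_free Bk by apply: row_base_free.
clearbody Bk; set G := Bk *m Bk^T.
have G_unit : G \in unitmx.
  rewrite -row_free_unit; apply: inj_row_free => v vG.
  have vBk : v *m Bk = 0.
    by apply: mul_trmx_self_eq0; rewrite trmx_mul mulmxA -(mulmxA v) -/G vG mul0mx mxE.
  by move/eqP: vBk; rewrite mulmx_free_eq0 // => /eqP.
set K := Bk^T *m invmx G *m Bk.
have MBkT : M *m Bk^T = 0 by apply: trmx_inj; rewrite trmx_mul trmxK MT BkM trmx0.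
have MK : M *m K = 0 by rewrite /K !mulmxA MBkT !mul0mx.
have KM : K *m M = 0 by rewrite /K -mulmxA BkM mulmx0.
have KK : K *m K = K.
  have -> : K *m K = Bk^T *m (invmx G *m G) *m invmx G *m Bk by rewrite /K /G !mulmxA.
  by rewrite mulVmx // mulmx1.
have KT : K^T = K by rewrite /K !trmx_mul trmxK trmx_inv /G trmx_mul trmxK !mulmxA.
have MK_unit : M + K \in unitmx.
  rewrite -row_free_unit; apply: inj_row_free => v vMK.
  have vK : v *m K = 0.
    by have := congr1 (mulmx^~ K) vMK; rewrite mul0mx -mulmxA mulmxDl MK KK add0r.
  have /ker_sub/submxP[u vE] : v *m M = 0 by move: vMK; rewrite mulmxDr vK addr0.
  have : v *m K = v.
    rewrite vE; have -> : u *m Bk *m K = u *m (G *m invmx G) *m Bk.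
      by rewrite /K /G !mulmxA.
    by rewrite mulmxV // mulmx1.
  by rewrite vK => <-.
set Y := invmx (M + K).
have KY : K *m Y = K.
  have E : K *m (M + K) = K by rewrite mulmxDr KM KK add0r.
  by rewrite -{1}E -mulmxA mulmxV // mulmx1.
have YK : Y *m K = K.
  have E : (M + K) *m K = K by rewrite mulmxDl MK KK add0r.
  by rewrite -{1}E mulmxA mulVmx // mul1mx.
have MX : M *m (Y - K) = 1%:M - K.
  by have := mulmxV MK_unit; rewrite -/Y mulmxDl KY mulmxBr MK subr0 => <-; rewrite addrK.
have XM : (Y - K) *m M = 1%:M - K.
  by have := mulVmx MK_unit; rewrite -/Y mulmxDr YK mulmxBl KM subr0 => <-; rewrite addrK.
have KX : K *m (Y - K) = 0 by rewrite mulmxBr KY KK subrr.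
exists (Y - K); split.
- by rewrite MX mulmxBl mul1mx KM subr0.
- by rewrite XM mulmxBl mul1mx KX subr0.
- by rewrite MX linearB /= trmx1 KT.
- by rewrite XM linearB /= trmx1 KT.
Qed.

Lemma MP_pinvP M : M^T = M -> is_MP_pinv M (MP_pinv M).
Proof.
by move=> /sym_MP_pinv_exists ex_pinv; apply: (xgetPex 0 (P := [set X | is_MP_pinv M X])).
Qed.

Lemma MP_pinv_form M (w b : 'cV[R]_k) : M^T = M -> M *m w = b ->
  (b^T *m MP_pinv M *m b) 0 0 = qform M w.
Proof.
move=> MT <-; have [MXM _ _ _] := MP_pinvP MT.
rewrite trmx_mul MT /qform.
have -> : w^T *m M *m MP_pinv M *m (M *m w) = w^T *m (M *m MP_pinv M *m M) *m w.
  by rewrite !mulmxA.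
by rewrite MXM.
Qed.

Lemma sym_range_orth_ker M (b : 'cV[R]_k) : M^T = M ->
  (forall y : 'cV[R]_k, M *m y = 0 -> (y^T *m b) 0 0 = 0) -> exists w, M *m w = b.
Proof.
move=> MT b_orth; have [MXM _ MX_sym _] := MP_pinvP MT.
set P := M *m MP_pinv M in MX_sym.
have MP : M *m P = M by rewrite -{1}MT -MX_sym -trmx_mul /P MXM MT.
have PP : P *m P = P by rewrite /P mulmxA MXM.
set y := b - P *m b.
have My : M *m y = 0 by rewrite /y mulmxBr mulmxA MP subrr.
have yP : y^T *m P = 0.
  by rewrite -MX_sym -trmx_mul /y mulmxBr mulmxA PP subrr trmx0.
have yy : (y^T *m y) 0 0 = 0.
  by rewrite {2}/y mulmxBr mulmxA yP mul0mx subr0 b_orth.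
exists (MP_pinv M *m b); apply/eqP; rewrite mulmxA -/P eq_sym -subr_eq0.
by rewrite -/y (trmx_mul_self_eq0 yy).
Qed.
End PseudoInverse.

Lemma cvg_one_sub_div_pinfty (R : realFieldType) (s : R) :
  (1 - s / x) @[x --> +oo] --> (1 : R).
Proof.
have inv_cvg0 : (fun x : R => x^-1) @ +oo --> (0 : R).
  by apply/gtr0_cvgV0; [exact: nbhs_pinfty_gt | exact: cvg_id].
rewrite -[X in _ --> X]subr0 -(mulr0 s).
by apply: cvgB; [exact: cvg_cst | exact: cvgMl_tmp].
Qed.

Section InformationMatrix.
Variables (R : realType) (k : nat) (calI : {set {set 'I_k}}) (Sigma : 'M[R]_k).
Hypothesis Sigma_sym : Sigma^T = Sigma.
Hypothesis Sigma_pd : forall x : 'cV[R]_k, x != 0 -> 0 < qform Sigma x.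

Local Notation info n := (info_mx calI Sigma n).
Local Notation proj I := (Defs.proj_mx R I).
Implicit Types (I : {set 'I_k}) (n : {set 'I_k} -> R) (x : 'cV[R]_k).

Definition info_block (I : {set 'I_k}) : 'M[R]_k :=
  (proj I)^T *m invmx (Sigma_sub Sigma I) *m proj I.

Lemma info_mxE n : info n = \sum_(I in calI) n I *: info_block I.
Proof. by []. Qed.

Lemma proj_mx_mul_tr I : proj I *m (proj I)^T = 1%:M.
Proof.
apply/matrixP => i i'; rewrite !mxE (bigD1 (enum_val i)) //= big1.
  by rewrite !mxE eqxx mul1r addr0 (inj_eq enum_val_inj) eq_sym.
by move=> j /negbTE ji; rewrite !mxE eq_sym ji mul0r.
Qed.

Lemma proj_mx_mulE I (x : 'cV[R]_k) i : (proj I *m x) i 0 = x (enum_val i) 0.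
Proof.
rewrite mxE (bigD1 (enum_val i)) //= big1 ?mxE ?eqxx ?mul1r ?addr0 //.
by move=> j /negbTE ji; rewrite mxE eq_sym ji mul0r.
Qed.

Lemma Sigma_sub_sym I : (Sigma_sub Sigma I)^T = Sigma_sub Sigma I.
Proof. by rewrite /Sigma_sub !trmx_mul trmxK Sigma_sym mulmxA. Qed.

Lemma Sigma_sub_pd I z : z != 0 -> 0 < qform (Sigma_sub Sigma I) z.
Proof.
move=> z0; have -> : qform (Sigma_sub Sigma I) z = qform Sigma ((proj I)^T *m z).
  by rewrite /qform /Sigma_sub trmx_mul trmxK !mulmxA.
apply: Sigma_pd; apply: contra z0 => /eqP Pz0.
by rewrite -(mul1mx z) -proj_mx_mul_tr -mulmxA Pz0 mulmx0.
Qed.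

Lemma Sigma_sub_unit I : Sigma_sub Sigma I \in unitmx.
Proof.
rewrite -row_free_unit; apply: inj_row_free => v vS; apply/eqP; apply: contraT => v0.
have := @Sigma_sub_pd I v^T; rewrite trmx_eq0 => /(_ v0).
by rewrite /qform trmxK vS mul0mx mxE ltxx.
Qed.

Lemma info_block_sym I : (info_block I)^T = info_block I.
Proof. by rewrite /info_block !trmx_mul trmxK trmx_inv Sigma_sub_sym mulmxA. Qed.

Lemma qform_info_block I x : qform (info_block I) x =
  qform (Sigma_sub Sigma I) (invmx (Sigma_sub Sigma I) *m (proj I *m x)).
Proof.
set S := Sigma_sub Sigma I; set u := proj I *m x.
have SSu : S *m (invmx S *m u) = u by rewrite mulmxA mulmxV ?Sigma_sub_unit // mul1mx.
rewrite /qform trmx_mul trmx_inv Sigma_sub_sym -/S -(mulmxA _ S) SSu.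
by rewrite /u /info_block trmx_mul !mulmxA.
Qed.

Lemma info_block_psd I x : 0 <= qform (info_block I) x.
Proof.
rewrite qform_info_block; set z := (X in qform _ X).
have [->|z0] := eqVneq z 0; first by rewrite /qform mulmx0 mxE.
exact/ltW/Sigma_sub_pd.
Qed.

Lemma info_block_qform_eq0 I x : qform (info_block I) x = 0 -> proj I *m x = 0.
Proof.
rewrite qform_info_block; set z := (X in qform _ X) => qz.
have z0 : z = 0.
  by apply/eqP; apply: contraT => /(@Sigma_sub_pd I); rewrite qz ltxx.
have := congr1 (mulmx (Sigma_sub Sigma I)) z0.
by rewrite mulmx0 /z mulmxA mulmxV ?Sigma_sub_unit // mul1mx.
Qed.

Lemma qform_info_mx n x :
  qform (info n) x = \sum_(I in calI) n I * qform (info_block I) x.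
Proof.
rewrite /qform info_mxE mulmx_sumr mulmx_suml summxE; apply: eq_bigr => I _.
by rewrite -scalemxAr -scalemxAl mxE.
Qed.

Lemma info_mx_sym n : (info n)^T = info n.
Proof.
rewrite info_mxE; apply/matrixP => i j; rewrite mxE !summxE; apply: eq_bigr => I _.
have sym_ij : info_block I j i = info_block I i j.
  by rewrite -{2}info_block_sym [(info_block I)^T i j]mxE.
by rewrite [LHS]mxE [RHS]mxE sym_ij.
Qed.

Lemma info_mxZ t n : info (fun I => t * n I) = t *: info n.
Proof. by rewrite !info_mxE scaler_sumr; apply: eq_bigr => I _; rewrite scalerA. Qed.

Definition nonneg_alloc (n : {set 'I_k} -> R) := forall I, I \in calI -> 0 <= n I.

Lemma info_mx_psd n x : nonneg_alloc n -> 0 <= qform (info n) x.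
Proof.
move=> n_ge0; rewrite qform_info_mx sumr_ge0 // => I I_in.
by rewrite mulr_ge0 ?n_ge0 ?info_block_psd.
Qed.

Lemma info_mx_qform_eq0 n x I : nonneg_alloc n -> qform (info n) x = 0 ->
  I \in calI -> 0 < n I -> proj I *m x = 0.
Proof.
move=> n_ge0; rewrite qform_info_mx => qx0 I_in nI; apply: info_block_qform_eq0.
have term_ge0 J : J \in calI -> 0 <= n J * qform (info_block J) x.
  by move=> J_in; rewrite mulr_ge0 ?n_ge0 ?info_block_psd.
have /eqP := psumr_eq0P term_ge0 qx0 I_in.
by rewrite mulf_eq0 gt_eqF //= => /eqP.
Qed.

Lemma info_mx_qform_eq0_mul n x : nonneg_alloc n -> qform (info n) x = 0 ->
  info n *m x = 0.
Proof.
move=> n_ge0 qx0; rewrite info_mxE mulmx_suml big1 // => I I_in.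
have /orP[/eqP <-|nI] : (0 == n I) || (0 < n I) by rewrite -le_eqVlt n_ge0.
  by rewrite scale0r mul0mx.
rewrite -scalemxAl /info_block -mulmxA.
by rewrite (info_mx_qform_eq0 n_ge0 qx0 I_in nI) mulmx0 scaler0.
Qed.

Variable a : 'cV[R]_k.
Local Notation V n := (Vvar calI Sigma a n).

Definition covers_supp n := forall j : 'I_k, a j 0 != 0 ->
  exists2 I, I \in calI & (j \in I) && (0 < n I).

Lemma covers_supp_le m n : covers_supp m ->
  (forall I, I \in calI -> m I <= n I) -> covers_supp n.
Proof.
move=> m_cov mn j /m_cov[I I_in /andP[jI mI]]; exists I => //.
by rewrite jI (lt_le_trans mI) ?mn.
Qed.

Lemma info_mx_range n : nonneg_alloc n -> covers_supp n -> exists w, info n *m w = a.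
Proof.
move=> n_ge0 n_cov; apply: sym_range_orth_ker (info_mx_sym n) _ => y info_y.
have qy0 : qform (info n) y = 0 by rewrite /qform -mulmxA info_y mulmx0 mxE.
have y_supp j : a j 0 != 0 -> y j 0 = 0.
  case/n_cov => I I_in /andP[jI nI].
  have /matrixP/(_ (enum_rank_in jI j) 0) := info_mx_qform_eq0 n_ge0 qy0 I_in nI.
  by rewrite proj_mx_mulE enum_rankK_in // mxE.
rewrite mxE big1 // => j _; rewrite mxE.
by have [->|/y_supp ->] := eqVneq (a j 0) 0; rewrite ?mulr0 ?mul0r.
Qed.

Lemma Vvar_qform n w : info n *m w = a -> V n = qform (info n) w.
Proof. exact: MP_pinv_form (info_mx_sym n). Qed.

Lemma Vvar_scale n t : nonneg_alloc n -> covers_supp n -> 0 < t ->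
  V (fun I => t * n I) = V n / t.
Proof.
move=> n_ge0 n_cov t_gt0; have [w nw] := info_mx_range n_ge0 n_cov.
have tnw : info (fun I => t * n I) *m (t^-1 *: w) = a.
  by rewrite info_mxZ -scalemxAl -scalemxAr scalerA mulfV ?gt_eqF // scale1r.
rewrite (Vvar_qform tnw) (Vvar_qform nw) info_mxZ qformZl qformZr.
by field; rewrite gt_eqF.
Qed.

(* With M w = a and N z = a, expand 0 <= (w - z)^T M (w - z) and use
   z^T M w = z^T a = z^T N z >= z^T M z. *)
Lemma Vvar_antitone m n : nonneg_alloc m -> covers_supp m ->
  (forall I, I \in calI -> m I <= n I) -> V n <= V m.
Proof.
move=> m_ge0 m_cov mn.
have n_ge0 : nonneg_alloc n by move=> I I_in; apply: le_trans (m_ge0 I I_in) (mn I I_in).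
have [w mw] := info_mx_range m_ge0 m_cov.
have [z nz] := info_mx_range n_ge0 (covers_supp_le m_cov mn).
rewrite (Vvar_qform mw) (Vvar_qform nz).
have cross : (z^T *m info m *m w) 0 0 = qform (info n) z.
  by rewrite -mulmxA mw -nz /qform mulmxA.
have zz : qform (info m) z <= qform (info n) z.
  rewrite !qform_info_mx; apply: ler_sum => I I_in.
  by rewrite ler_wpM2r ?info_block_psd ?mn.
have := info_mx_psd (w - z) m_ge0; rewrite qformB ?info_mx_sym // cross; lra.
Qed.

Lemma Vvar_gt0 n : a != 0 -> nonneg_alloc n -> covers_supp n -> 0 < V n.
Proof.
move=> a0 n_ge0 n_cov; have [w nw] := info_mx_range n_ge0 n_cov.
rewrite (Vvar_qform nw) lt_def info_mx_psd // andbT.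
by apply: contra a0 => /eqP/(info_mx_qform_eq0_mul n_ge0); rewrite nw => ->.
Qed.

End InformationMatrix.

Section Allocation.
Variables (R : realType) (k : nat) (calI : {set {set 'I_k}}) (Sigma : 'M[R]_k).
Hypothesis Sigma_sym : Sigma^T = Sigma.
Hypothesis Sigma_pd : forall x : 'cV[R]_k, x != 0 -> 0 < qform Sigma x.
Variables (a : 'cV[R]_k) (c : {set 'I_k} -> R).
Implicit Types (I : {set 'I_k}) (n : {set 'I_k} -> R).

Local Notation V n := (Vvar calI Sigma a n).
Local Notation feasible B n := (feasible calI c a B n).

Lemma feasibleZ B t n : 0 < t -> feasible B n -> feasible (t * B) (fun I => t * n I).
Proof.
move=> t_gt0 [n_ge0 n_budget n_cov]; split.
- by move=> I I_in; rewrite mulr_ge0 ?(ltW t_gt0) ?n_ge0.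
- rewrite (eq_bigr (fun I => t * (c I * n I))) => [|I _]; last by rewrite mulrCA.
  by rewrite -mulr_sumr ler_wpM2l // ltW.
- by move=> j /n_cov[I I_in /andP[jI nI]]; exists I; rewrite ?jI ?mulr_gt0.
Qed.

Variable nu : {set 'I_k} -> R.
Hypothesis nu_feasible : feasible 1 nu.
Hypothesis nu_opt : forall m, feasible 1 m -> V nu <= V m.

Lemma Vvar_opt_le B n : 0 < B -> feasible B n -> V nu <= B * V n.
Proof.
move=> B_gt0 nF; have [n_ge0 _ n_cov] := nF.
have iB_gt0 : 0 < B^-1 by rewrite invr_gt0.
have := feasibleZ iB_gt0 nF; rewrite mulVf ?gt_eqF // => /nu_opt.
by rewrite Vvar_scale // invrK mulrC.
Qed.

Lemma Vvar_budget_opt B n : 0 < B -> feasible B n ->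
  (forall m, feasible B m -> V n <= V m) -> B * V n = V nu.
Proof.
move=> B_gt0 nF n_opt; apply/le_anti; rewrite Vvar_opt_le // andbT.
have [nu_ge0 _ nu_cov] := nu_feasible.
have := feasibleZ B_gt0 nu_feasible; rewrite mulr1 => /n_opt.
by rewrite Vvar_scale // ler_pdivlMr // mulrC.
Qed.

Hypothesis c_gt0 : forall I, I \in calI -> 0 < c I.

(* Terms with nu I = 0 contribute 0, as (nu I)^-1 = 0 there. *)
Definition sum_inv_nu := \sum_(I in calI) (nu I)^-1.

Definition floor_alloc (B : R) I : R := (Num.floor (B * nu I))%:~R.

Lemma floor_alloc_le B I : floor_alloc B I <= B * nu I.
Proof. exact: floor_le. Qed.

Lemma floor_alloc_ge B I : I \in calI -> (B - sum_inv_nu) * nu I <= floor_alloc B I.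
Proof.
move=> I_in; have [nu_ge0 _ _] := nu_feasible.
have /orP[/eqP nu0|nuI] : (0 == nu I) || (0 < nu I) by rewrite -le_eqVlt nu_ge0.
  by rewrite /floor_alloc -nu0 !mulr0 floor0.
have inv_le : (nu I)^-1 <= sum_inv_nu.
  rewrite /sum_inv_nu (bigD1 I) //= lerDl sumr_ge0 // => J /andP[J_in _].
  by rewrite invr_ge0 nu_ge0.
have one_le : 1 <= sum_inv_nu * nu I.
  by rewrite -(mulVf (lt0r_neq0 nuI)) ler_wpM2r // ltW.
have := floorD1_gt (B * nu I); rewrite intrD /floor_alloc mulrBl; lra.
Qed.

Lemma sum_inv_nu_ge0 : 0 <= sum_inv_nu.
Proof.
have [nu_ge0 _ _] := nu_feasible.
by rewrite sumr_ge0 // => I I_in; rewrite invr_ge0 nu_ge0.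
Qed.

Lemma floor_alloc_feasible B : sum_inv_nu < B ->
  feasible B (floor_alloc B) /\ integral_alloc calI (floor_alloc B).
Proof.
move=> SB; have B_gt0 : 0 < B := le_lt_trans sum_inv_nu_ge0 SB.
have t_gt0 : 0 < B - sum_inv_nu by rewrite subr_gt0.
have [lb_ge0 _ lb_cov] := feasibleZ t_gt0 nu_feasible.
have fl_ge0 I : I \in calI -> 0 <= floor_alloc B I.
  by move=> I_in; apply: le_trans (lb_ge0 I I_in) (floor_alloc_ge B I_in).
split; last first.
  move=> I I_in; exists `|Num.floor (B * nu I)|%N.
  by rewrite natr_absz ger0_norm // -(@ler0z R) fl_ge0.
split => //.
- have [_ + _] := feasibleZ B_gt0 nu_feasible; rewrite mulr1; apply: le_trans.
  by apply: ler_sum => I I_in; rewrite ler_wpM2l ?floor_alloc_le // ltW ?c_gt0.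
- exact: covers_supp_le lb_cov (fun I I_in => floor_alloc_ge B I_in).
Qed.

Lemma Vvar_floor_alloc_le B : sum_inv_nu < B ->
  B * V (floor_alloc B) <= V nu / (1 - sum_inv_nu / B).
Proof.
move=> SB; have B_gt0 : 0 < B := le_lt_trans sum_inv_nu_ge0 SB.
have t_gt0 : 0 < B - sum_inv_nu by rewrite subr_gt0.
have [nu_ge0 _ nu_cov] := nu_feasible.
have [lb_ge0 _ lb_cov] := feasibleZ t_gt0 nu_feasible.
have fl_le : V (floor_alloc B) <= V nu / (B - sum_inv_nu).
  rewrite -Vvar_scale //.
  by apply: (Vvar_antitone Sigma_sym Sigma_pd lb_ge0 lb_cov) => I; apply: floor_alloc_ge.
have -> : V nu / (1 - sum_inv_nu / B) = B * (V nu / (B - sum_inv_nu)).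
  by field; rewrite -?mulrBl ?gt_eqF //.
by rewrite ler_pM2l.
Qed.

Lemma floor_alloc_Vvar_cvg : (fun B => B * V (floor_alloc B)) @ +oo --> V nu.
Proof.
apply: (@squeeze_cvgr _ _ _ _ (cst (V nu)) (fun B => V nu / (1 - sum_inv_nu / B))).
- near=> B.
  have SB : sum_inv_nu < B by near: B; apply: nbhs_pinfty_gt; exact: num_real.
  have [flF _] := floor_alloc_feasible SB.
  by rewrite Vvar_opt_le ?Vvar_floor_alloc_le // (le_lt_trans sum_inv_nu_ge0 SB).
- exact: cvg_cst.
- have inv_cvg : (1 - sum_inv_nu / x)^-1 @[x --> +oo] --> (1 : R)^-1.
    by apply: cvgV; [exact: oner_neq0 | exact: cvg_one_sub_div_pinfty].
  rewrite invr1 in inv_cvg; rewrite -[X in _ --> X]mulr1; exact: cvgMl_tmp.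
Unshelve. all: by end_near.
Qed.

Hypothesis a_neq0 : a != 0.
Variables nfrac nint : R -> {set 'I_k} -> R.
Hypothesis nfrac_opt : forall B, 0 < B ->
  feasible B (nfrac B) /\ forall m, feasible B m -> V (nfrac B) <= V m.
Hypothesis nint_opt : forall B, 0 < B ->
  (exists m, feasible B m /\ integral_alloc calI m) ->
  [/\ feasible B (nint B), integral_alloc calI (nint B) &
    forall m, feasible B m -> integral_alloc calI m -> V (nint B) <= V m].

Lemma Vvar_frac_int_ratio_cvg : (fun B => V (nfrac B) / V (nint B)) @ +oo --> (1 : R).
Proof.
apply: (@squeeze_cvgr _ _ _ _ (fun B => 1 - sum_inv_nu / B) (cst 1)); last first.
- exact: cvg_cst.
- exact: cvg_one_sub_div_pinfty.
near=> B.
have SB : sum_inv_nu < B by near: B; apply: nbhs_pinfty_gt; exact: num_real.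
have B_gt0 : 0 < B := le_lt_trans sum_inv_nu_ge0 SB.
have [nu_ge0 _ nu_cov] := nu_feasible.
have [flF flZ] := floor_alloc_feasible SB.
have [frF fr_opt] := nfrac_opt B_gt0.
have [intF _ int_opt] := nint_opt B_gt0 (ex_intro _ _ (conj flF flZ)).
have frac_eq : V (nfrac B) = V nu / B.
  by rewrite -(Vvar_budget_opt B_gt0 frF fr_opt) mulrC mulKf ?gt_eqF.
have frac_gt0 : 0 < V (nfrac B) by rewrite frac_eq divr_gt0 // Vvar_gt0.
have int_ge : V (nfrac B) <= V (nint B) := fr_opt _ intF.
have int_le : B * V (nint B) <= V nu / (1 - sum_inv_nu / B).
  by apply: le_trans (Vvar_floor_alloc_le SB); rewrite ler_wpM2l ?int_opt // ltW.
have int_gt0 := lt_le_trans frac_gt0 int_ge.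
have t_gt0 : 0 < 1 - sum_inv_nu / B by rewrite subr_gt0 ltr_pdivrMr // mul1r.
rewrite /= ler_pdivrMr // mul1r int_ge andbT ler_pdivlMr // frac_eq.
move: int_le; rewrite !ler_pdivlMr // => int_le.
by rewrite mulrC [_ * V (nint B)]mulrC mulrA.
Unshelve. all: by end_near.
Qed.

End Allocation.

Theorem mainTheorem7 (R : realType) (k : nat)
  (calI : {set {set 'I_k}}) (c : {set 'I_k} -> R)
  (Sigma : 'M[R]_k) (a : 'cV[R]_k)
  (nu : {set 'I_k} -> R) (nfrac nint : R -> {set 'I_k} -> R) :
  (forall I, I \in calI -> I != finset.set0) ->
  (forall I, I \in calI -> 0 < c I) ->
  Sigma^T = Sigma ->
  (forall x : 'cV[R]_k, x != 0 -> 0 < (x^T *m Sigma *m x) 0 0) ->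
  a != 0 ->
  (forall j : 'I_k, a j 0 != 0 -> exists2 I, I \in calI & j \in I) ->
  feasible calI c a 1 nu ->
  (forall m, feasible calI c a 1 m -> Vvar calI Sigma a nu <= Vvar calI Sigma a m) ->
  (forall B, 0 < B -> feasible calI c a B (nfrac B) /\
     forall m, feasible calI c a B m ->
       Vvar calI Sigma a (nfrac B) <= Vvar calI Sigma a m) ->
  (forall B, 0 < B ->
     (exists m, feasible calI c a B m /\ integral_alloc calI m) ->
     [/\ feasible calI c a B (nint B), integral_alloc calI (nint B) &
       forall m, feasible calI c a B m -> integral_alloc calI m ->
         Vvar calI Sigma a (nint B) <= Vvar calI Sigma a m]) ->
  [/\ (fun B : R => B * Vvar calI Sigma a (fun I => (Num.floor (B * nu I))%:~R))
        @ +oo --> Vvar calI Sigma a nu,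
      (forall B, 0 < B -> B * Vvar calI Sigma a (nfrac B) = Vvar calI Sigma a nu) &
      (fun B : R => Vvar calI Sigma a (nfrac B) / Vvar calI Sigma a (nint B))
        @ +oo --> (1 : R)].
Proof.
(* Nonemptiness of the index sets plays no role, and supp a is covered by
   the feasible allocation nu. *)
move=> _ c_gt0 Sigma_sym Sigma_pd a_neq0 _ nu_feasible nu_opt nfrac_opt nint_opt.
split.
- exact: (floor_alloc_Vvar_cvg Sigma_sym Sigma_pd nu_feasible nu_opt c_gt0).
- move=> B B_gt0; have [nfracF nfrac_min] := nfrac_opt B B_gt0.
  exact: (Vvar_budget_opt Sigma_sym Sigma_pd nu_feasible nu_opt B_gt0 nfracF nfrac_min).
- exact: (Vvar_frac_int_ratio_cvg Sigma_sym Sigma_pd nu_feasible nu_opt c_gt0 a_neq0 nfrac_opt nint_opt).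
Qed.
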